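(* Let $G$ be an infinite compact group and $\alpha$ an automorphism of $G$ such that $(G,\alpha)$ has finite depth. Let $V$ be an open subgroup of $G$ with $\bigcap_{k\in\mathbb{Z}}\alpha^k(V)=\{1\}$ and $V=V_+V_-$. Then the index $[\alpha(V_+):V_+]$ is strictly greater than $1$ and does not depend on the choice of the open subgroup $V$ with these two properties.
   Context: $V_+=\bigcap_{k\ge0}\alpha^k(V)$ and $V_-=\bigcap_{k\ge0}\alpha^{-k}(V)$. $(G,\alpha)$ has finite depth if there is an open subgroup $V\le G$ with $\bigcap_{k\in\mathbb{Z}}\alpha^k(V)=\{1\}$. *)

From HB Require Import structures.
From mathcomp Require Import all_boot all_order all_algebra.
From mathcomp Require Import all_classical all_reals all_analysis.
Set Implicit Arguments. Unset Strict Implicit. Unset Printing Implicit Defensive.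
Import Order.TTheory GRing.Theory Num.Theory.
Local Open Scope classical_set_scope.

Section TopGroups.
Context {T : topologicalType}.

Definition topological_group (mul : T -> T -> T) (inv : T -> T) (one : T) : Prop :=
  [/\ (forall x y z, mul x (mul y z) = mul (mul x y) z),
      (forall x, mul one x = x),
      (forall x, mul (inv x) x = one),
      continuous (fun p : T * T => mul p.1 p.2) &
      continuous inv].

(* alpha is an automorphism of the topological group: a bijective continuous
   group homomorphism which is an open map (i.e. its inverse is continuous). *)
Definition topgroup_automorphism (mul : T -> T -> T) (alpha : T -> T) : Prop :=
  [/\ (forall x y, alpha (mul x y) = mul (alpha x) (alpha y)),
      bijective alpha,
      continuous alpha &
      (forall U : set T, open U -> open (alpha @` U))].

Definition is_subgroup (mul : T -> T -> T) (inv : T -> T) (one : T) (H : set T) : Prop :=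
  [/\ H one,
      (forall x y, H x -> H y -> H (mul x y)) &
      (forall x, H x -> H (inv x))].

(* alpha^k(V) for k : int; for negative k = -n, alpha^k(V) = alpha^{-n}(V) is
   the preimage of V under alpha^n (alpha being bijective). *)
Definition apow_img (alpha : T -> T) (k : int) (V : set T) : set T :=
  match k with
  | Posz n => iter n alpha @` V
  | Negz n => iter n.+1 alpha @^-1` V
  end.

Definition Vplus (alpha : T -> T) (V : set T) : set T :=
  \bigcap_(k in [set: nat]) apow_img alpha (Posz k) V.

Definition Vminus (alpha : T -> T) (V : set T) : set T :=
  \bigcap_(k in [set: nat]) apow_img alpha (- (Posz k))%R V.

Definition tidy_core (alpha : T -> T) (V : set T) : set T :=
  \bigcap_(k in [set: int]) apow_img alpha k V.

Definition setmul (mul : T -> T -> T) (A B : set T) : set T :=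
  [set mul x y | x in A & y in B].

(* the set of left cosets x K of K with x in H; its cardinality is [H : K] *)
Definition left_cosets (mul : T -> T -> T) (H K : set T) : set (set T) :=
  [set [set mul x y | y in K] | x in H].

Definition finite_depth (mul : T -> T -> T) (inv : T -> T) (one : T)
    (alpha : T -> T) : Prop :=
  exists V : set T, [/\ is_subgroup mul inv one V, open V &
                        tidy_core alpha V = [set one]].

End TopGroups.

(* Write P := V_+.  It is stable under alpha^-1, so P is a subgroup of
   alpha(P), and [alpha(P) : P] is finite because alpha(P) and V meet in P and
   V has finite index in the compact group G.

   Positivity: if alpha(P) = P, then P lies in the tidy core and is trivial;
   so V = V_- is alpha-stable, and [G : V] = [G : alpha(V)] = [G : V][V : alpha(V)]
   forces alpha(V) = V.  Then V lies in the tidy core, V = {1}, and G, a finite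
   union of cosets of V, would be finite.

   Independence: for an open subgroup W let U := V ∩ W.  By compactness and
   the triviality of the tidy core, alpha^-k(x) lies in W for all x in P and
   all large k, so [P : U_+] is finite.  Computing [alpha(P) : U_+] through P
   and through alpha(U_+) gives [alpha(P) : P] = [alpha(U_+) : U_+]; apply this
   to (V, W) and to (W, V). *)

From HB Require Import structures.
From mathcomp Require Import all_boot all_order all_algebra.
From mathcomp Require Import all_classical all_reals all_analysis.
Local Open Scope classical_set_scope.
Local Open Scope card_scope.
Set Implicit Arguments. Unset Strict Implicit. Unset Printing Implicit Defensive.

Lemma card_setX_II (A B : Type) (S : set A) (R : set B) n m :
  S #= `I_n -> R #= `I_m -> S `*` R #= `I_(n * m).
Proof.
move=> /card_set_bijP[f [fS finj fsurj]] /card_set_bijP[g [gR ginj gsurj]].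
apply/card_set_bijP; exists (fun p => f p.1 * m + g p.2)%N; split.
- move=> [s r] [/= Ss Rr]; have /= fs := fS _ Ss; have /= gr := gR _ Rr.
  apply: (@leq_trans ((f s).+1 * m)); first by rewrite mulSnr ltn_add2l.
  by rewrite leq_mul2r fs orbT.
- move=> [s r] [s' r'] /set_mem[/= Ss Rr] /set_mem[/= Ss' Rr'] e.
  have /= gr := gR _ Rr; have /= gr' := gR _ Rr'.
  have m_gt0 : (0 < m)%N by case: (m) gr.
  have ef : f s = f s'.
    have := congr1 (divn^~ m) e.
    by rewrite /= !divnMDl // (divn_small gr) (divn_small gr') !addn0.
  have eg : g r = g r'.
    by have := congr1 (modn^~ m) e; rewrite /= !modnMDl !modn_small.
  by rewrite (finj s s' (mem_set Ss) (mem_set Ss') ef)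
             (ginj r r' (mem_set Rr) (mem_set Rr') eg).
- move=> k /= km.
  have m_gt0 : (0 < m)%N by case: (m) km; rewrite ?muln0.
  have [s Ss fs] := fsurj (k %/ m)%N ltac:(by rewrite /= ltn_divLR).
  have [r Rr gr] := gsurj (k %% m)%N ltac:(by rewrite /= ltn_mod).
  by exists (s, r) => //=; rewrite fs gr -divn_eq.
Qed.

Lemma card_le1_eq (A : Type) (S : set A) a b :
  S #<= [set: unit] -> S a -> S b -> a = b.
Proof.
move=> /pcard_injP[f finj] Sa Sb.
by apply: finj; rewrite ?inE //; case: (f a); case: (f b).
Qed.

Lemma card_II1_le_unit (A : Type) (S : set A) : S #= `I_1 -> S #<= [set: unit].
Proof.
rewrite card_eq_le => /andP[S1 _]; apply: card_le_trans S1 _.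
apply/pcard_leP/injfunPex.
exists (fun=> tt) => // i j /set_mem + /set_mem.
by rewrite /= !ltnS !leqn0 => /eqP -> /eqP ->.
Qed.

Lemma card_II_gt0 (A : Type) (S : set A) a n : S #= `I_n -> S a -> (0 < n)%N.
Proof. by move=> /card_set_bijP[f [fS _ _]] /fS; case: n {fS}. Qed.

(* [compact_cover] is stated for pointed spaces only; any point of T makes it
   one. *)
Definition pointed_at (T : topologicalType) (x : T) : Type := T.
HB.instance Definition _ (T : topologicalType) (x : T) :=
  Topological.copy (pointed_at x) T.
HB.instance Definition _ (T : topologicalType) (x : T) :=
  isPointed.Build (pointed_at x) x.

Lemma compact_cover_at (T : topologicalType) (x : T) (A : set T) :
  compact A -> cover_compact A.
Proof.
by move=> cA; have : @compact (pointed_at x) A by []; rewrite compact_cover.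
Qed.

Lemma continuous_iter (T : topologicalType) (f : T -> T) :
  continuous f -> forall k, continuous (iter k f).
Proof.
move=> fC; elim => [|k IH] x /=; first exact: cvg_id.
exact: continuous_comp (IH x) (fC _).
Qed.

Lemma continuous_mulr (T : topologicalType) (mul : T -> T -> T) :
  continuous (fun p : T * T => mul p.1 p.2) -> forall c, continuous (mul c).
Proof.
move=> mulC c y; apply: (continuous_comp (f := pair c)) (mulC _).
by apply: cvg_pair; [exact: cvg_cst | exact: cvg_id].
Qed.

Section Group.
Variable T : topologicalType.
Variables (mul : T -> T -> T) (inv : T -> T) (one : T).
Hypothesis mulA : forall x y z, mul x (mul y z) = mul (mul x y) z.
Hypothesis mul1x : forall x, mul one x = x.
Hypothesis mulVx : forall x, mul (inv x) x = one.

Lemma mulKx a x : mul (inv a) (mul a x) = x.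
Proof. by rewrite mulA mulVx mul1x. Qed.

Lemma mulxI a x y : mul a x = mul a y -> x = y.
Proof. by move=> e; rewrite -(mulKx a x) e mulKx. Qed.

Lemma mulxV x : mul x (inv x) = one.
Proof.
have idem : mul (mul x (inv x)) (mul x (inv x)) = mul x (inv x).
  by rewrite -mulA (mulA (inv x)) mulVx mul1x.
by rewrite -[LHS](mulKx (mul x (inv x))) idem mulVx.
Qed.

Lemma mulx1 x : mul x one = x.
Proof. by rewrite -(mulVx x) mulA mulxV mul1x. Qed.

Lemma mulVKx a x : mul a (mul (inv a) x) = x.
Proof. by rewrite mulA mulxV mul1x. Qed.

Lemma invM x y : inv (mul x y) = mul (inv y) (inv x).
Proof. by apply: (@mulxI (mul x y)); rewrite mulxV -mulA mulVKx mulxV. Qed.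

Lemma inv1 : inv one = one.
Proof. by rewrite -[inv one]mulx1 mulVx. Qed.

Section Morphism.
Variable f : T -> T.
Hypothesis fM : forall x y, f (mul x y) = mul (f x) (f y).

Lemma morph1 : f one = one.
Proof. by apply: (@mulxI (f one)); rewrite -fM !mulx1. Qed.

Lemma morphV x : f (inv x) = inv (f x).
Proof. by apply: (@mulxI (f x)); rewrite -fM !mulxV morph1. Qed.

Lemma iter_morph k x y : iter k f (mul x y) = mul (iter k f x) (iter k f y).
Proof. by elim: k => //= k IH; rewrite IH fM. Qed.

End Morphism.

Notation subgroup := (is_subgroup mul inv one).

Section Subgroup.
Variable K : set T.
Hypothesis sK : subgroup K.

Lemma subgroup1 : K one. Proof. by case: sK. Qed.
Lemma subgroupM x y : K x -> K y -> K (mul x y). Proof. by case: sK => _ + _; apply. Qed.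
Lemma subgroupV x : K x -> K (inv x). Proof. by case: sK => _ _; apply. Qed.

Lemma subgroupVM x y : K x -> K y -> K (mul (inv x) y).
Proof. by move=> Kx Ky; apply: subgroupM (subgroupV Kx) Ky. Qed.

Definition lcoset x := [set mul x y | y in K].

Lemma lcosetP x y : lcoset x y <-> K (mul (inv x) y).
Proof.
split=> [[k Kk <-]|Ky]; first by rewrite mulKx.
by exists (mul (inv x) y); rewrite ?mulVKx.
Qed.

Lemma lcoset_refl x : lcoset x x.
Proof. by apply/lcosetP; rewrite mulVx; exact: subgroup1. Qed.

Lemma lcoset_eqP x y : lcoset x = lcoset y <-> K (mul (inv x) y).
Proof.
split=> [e|Kxy]; first by apply/lcosetP; rewrite e; exact: lcoset_refl.
apply/seteqP; split=> z /lcosetP Kz; apply/lcosetP.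
  have -> : mul (inv y) z = mul (inv (mul (inv x) y)) (mul (inv x) z).
    by rewrite invM -mulA mulKx.
  exact: subgroupVM.
have -> : mul (inv x) z = mul (mul (inv x) y) (mul (inv y) z).
  by rewrite -mulA mulVKx.
exact: subgroupM.
Qed.

End Subgroup.

Lemma subgroup_preimage f K : (forall x y, f (mul x y) = mul (f x) (f y)) ->
  subgroup K -> subgroup (f @^-1` K).
Proof.
move=> fM sK; split => /=.
- by rewrite morph1 //; exact: subgroup1.
- by move=> x y Kx Ky; rewrite fM; apply: subgroupM.
- by move=> x Kx; rewrite morphV //; apply: subgroupV.
Qed.

Lemma subgroup_bigcap (I : Type) (D : set I) (F : I -> set T) :
  (forall i, subgroup (F i)) -> subgroup (\bigcap_(i in D) F i).
Proof.
move=> sF; split.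
- by move=> i _; exact: subgroup1.
- by move=> x y Fx Fy i Di; apply: subgroupM; [exact: sF|exact: Fx|exact: Fy].
- by move=> x Fx i Di; apply: subgroupV; [exact: sF|exact: Fx].
Qed.

Lemma subgroupI (A B : set T) : subgroup A -> subgroup B -> subgroup (A `&` B).
Proof.
move=> sA sB; split; first by split; exact: subgroup1.
- by move=> x y [Ax Bx] [Ay By]; split; apply: subgroupM.
- by move=> x [Ax Bx]; split; apply: subgroupV.
Qed.

Definition coset_rep (H K C : set T) := xget one (fun x => H x /\ lcoset K x = C).

Lemma coset_repP H K C : left_cosets mul H K C ->
  H (coset_rep H K C) /\ lcoset K (coset_rep H K C) = C.
Proof.
move=> [x Hx <-].
by apply: (@xgetPex _ one (fun y => H y /\ lcoset K y = lcoset K x)); exists x.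
Qed.

Lemma index_tower (L H K : set T) : subgroup L -> subgroup H -> subgroup K ->
  K `<=` H -> H `<=` L ->
  left_cosets mul L K #= left_cosets mul L H `*` left_cosets mul H K.
Proof.
move=> sL sH sK KH HL; apply: card_esym; apply/card_set_bijP.
exists (fun p => lcoset K (mul (coset_rep L H p.1) (coset_rep H K p.2))); split.
- move=> [C D] [/= /coset_repP[Lc _] /coset_repP[Hd _]].
  by eexists; [apply: (subgroupM sL) Lc (HL _ Hd)|].
- move=> [C D] [C' D'] /set_mem[/= /coset_repP[Lc eC] /coset_repP[Hd eD]].
  move=> /set_mem[/= /coset_repP[Lc' eC'] /coset_repP[Hd' eD']] /=.
  set c := coset_rep L H C in Lc eC *; set d := coset_rep H K D in Hd eD *.
  set c' := coset_rep L H C' in Lc' eC' *; set d' := coset_rep H K D' in Hd' eD' *.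
  move/(lcoset_eqP sK) => Kdd.
  have Hcc : H (mul (inv c) c').
    have -> : mul (inv c) c' =
              mul (mul d (mul (inv (mul c d)) (mul c' d'))) (inv d').
      by rewrite invM -!mulA mulVKx mulxV mulx1.
    by apply: (subgroupM sH) (subgroupV sH Hd'); apply: (subgroupM sH) (KH _ Kdd).
  have eCC : C = C' by rewrite -eC -eC'; apply/(lcoset_eqP sH).
  have ecc : c = c' by rewrite /c /c' eCC.
  rewrite -ecc invM -mulA mulKx in Kdd.
  by rewrite eCC -eD -eD'; congr (_, _); apply/(lcoset_eqP sK).
- move=> _ [x Lx <-].
  have LHx : left_cosets mul L H (lcoset H x) by exists x.
  have [Lc eC] := coset_repP LHx; set c := coset_rep L H _ in Lc eC *.
  have Hcx : H (mul (inv c) x) by apply/(lcoset_eqP sH).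
  have HKcx : left_cosets mul H K (lcoset K (mul (inv c) x)) by exists (mul (inv c) x).
  have [Hd eD] := coset_repP HKcx; set d := coset_rep H K _ in Hd eD *.
  have Kdcx : K (mul (inv d) (mul (inv c) x)) by apply/(lcoset_eqP sK).
  exists (lcoset H x, lcoset K (mul (inv c) x)) => //=.
  by apply/(lcoset_eqP sK); rewrite invM -mulA.
Qed.

Lemma index_towerII (L H K : set T) n m : subgroup L -> subgroup H -> subgroup K ->
  K `<=` H -> H `<=` L ->
  left_cosets mul L H #= `I_n -> left_cosets mul H K #= `I_m ->
  left_cosets mul L K #= `I_(n * m).
Proof.
move=> sL sH sK KH HL LHn HKm.
exact: card_eq_trans (index_tower sL sH sK KH HL) (card_setX_II LHn HKm).
Qed.

Lemma index_morph (f : T -> T) (H K : set T) :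
  (forall x y, f (mul x y) = mul (f x) (f y)) -> injective f ->
  left_cosets mul H K #= left_cosets mul (f @` H) (f @` K).
Proof.
move=> fM finj.
have f_lcoset x : f @` lcoset K x = lcoset (f @` K) (f x).
  apply/seteqP; split=> _ [_ [k Kk <-] <-].
    by rewrite fM; exists (f k) => //; exists k.
  by exists (mul x k); [exists k | rewrite fM].
apply/card_set_bijP; exists (image^~ f); split.
- by move=> _ [x Hx <-]; rewrite f_lcoset; exists (f x) => //; exists x.
- move=> C C' _ _ e; apply/seteqP; split=> z.
    by rewrite -(image_inj (f := f) (A := C)) // e image_inj.
  by rewrite -(image_inj (f := f) (A := C')) // -e image_inj.
- by move=> _ [_ [x Hx <-] <-]; exists (lcoset K x); [exists x|rewrite f_lcoset].
Qed.

Lemma index_le_cosets (B A U : set T) : subgroup A -> subgroup U ->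
  (forall x, B x -> U x -> A x) -> (forall x y, B x -> B y -> B (mul (inv x) y)) ->
  left_cosets mul B A #<= left_cosets mul setT U.
Proof.
move=> sA sU BUA BVM; apply/pcard_leP/injfunPex.
exists (fun C => lcoset U (coset_rep B A C)).
- by move=> C _; exists (coset_rep B A C).
- move=> C C' /set_mem/coset_repP[Bc eC] /set_mem/coset_repP[Bc' eC'].
  by move/(lcoset_eqP sU) => Ucc; rewrite -eC -eC'; apply/(lcoset_eqP sA); auto.
Qed.

Hypothesis mul_cont : forall c, continuous (mul c).

Lemma open_lcoset (U : set T) x : subgroup U -> open U -> open (lcoset U x).
Proof.
move=> sU oU; have -> : lcoset U x = mul (inv x) @^-1` U.
  by apply/seteqP; split=> z /(lcosetP U).
by move/continuousP: (@mul_cont (inv x)); apply.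
Qed.

Lemma closed_open_subgroup (U : set T) : subgroup U -> open U -> closed U.
Proof.
move=> sU oU; rewrite -[U]setCK closedC.
have -> : ~` U = \bigcup_(x in ~` U) lcoset U x.
  apply/seteqP; split=> [x nUx|x [y nUy [u Uu <-]] Uyu].
    by exists x => //; exact: lcoset_refl.
  apply: nUy; rewrite -[y]mulx1 -(mulxV u) mulA.
  exact: (subgroupM sU) (subgroupV sU Uu).
by apply: bigcup_open => x _; exact: open_lcoset.
Qed.

Hypothesis compactT : compact [set: T].

Lemma finite_cosets_open_subgroup (U : set T) : subgroup U -> open U ->
  finite_set (left_cosets mul setT U).
Proof.
move=> sU oU.
have [||D _ cov] := compact_cover_at one compactT (D := [set: T]) (f := lcoset U).
- by move=> x _; exact: open_lcoset.
- by move=> x _; exists x => //; exact: lcoset_refl.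
apply: sub_finite_set (finite_image (lcoset U) (finite_fset D)).
move=> _ [x _ <-]; have [d Dd /(lcosetP U) Udx] := cov x I.
by exists d => //; apply/(lcoset_eqP sU).
Qed.

Lemma finite_of_trivial_open_subgroup (U : set T) : subgroup U -> open U ->
  U `<=` [set one] -> finite_set [set: T].
Proof.
move=> sU oU U1; apply: card_le_finite (finite_cosets_open_subgroup sU oU).
apply/pcard_leP/injfunPex; exists (lcoset U) => [x _|x y _ _]; first by exists x.
by move/(lcoset_eqP sU)/U1 => /= e; rewrite -(mulVKx x y) e mulx1.
Qed.

Lemma subset_of_index_le1 (H K : set T) : subgroup H -> subgroup K ->
  left_cosets mul H K #<= [set: unit] -> H `<=` K.
Proof.
move=> sH sK HK1 x Hx; have := card_le1_eq HK1 (ex_intro2 _ _ one (subgroup1 sH) erefl)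
  (ex_intro2 _ _ x Hx erefl).
by move/(lcoset_eqP sK); rewrite inv1 mul1x.
Qed.

Section Automorphism.
Variables alpha beta : T -> T.
Hypothesis alphaM : forall x y, alpha (mul x y) = mul (alpha x) (alpha y).
Hypothesis alphaK : cancel alpha beta.
Hypothesis betaK : cancel beta alpha.
Hypothesis alpha_cont : continuous alpha.
Hypothesis alpha_open : forall U : set T, open U -> open (alpha @` U).

Lemma betaM x y : beta (mul x y) = mul (beta x) (beta y).
Proof. by rewrite -{1}(betaK x) -{1}(betaK y) -alphaM alphaK. Qed.

Lemma iter_alphaK k : cancel (iter k alpha) (iter k beta).
Proof. by elim: k => //= k IH x; rewrite iterSr iterS alphaK IH. Qed.

Lemma iter_betaK k : cancel (iter k beta) (iter k alpha).
Proof. by elim: k => //= k IH x; rewrite iterSr iterS betaK IH. Qed.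

Lemma image_iterE k (S : set T) : iter k alpha @` S = iter k beta @^-1` S.
Proof.
apply/seteqP; split=> [_ [y Sy <-]|x Sx] /=; first by rewrite iter_alphaK.
by exists (iter k beta x); rewrite ?iter_betaK.
Qed.

Lemma image_alphaE (S : set T) : alpha @` S = beta @^-1` S.
Proof. exact: (image_iterE 1). Qed.

Lemma VplusE (V : set T) :
  Vplus alpha V = \bigcap_(k in [set: nat]) (iter k beta @^-1` V).
Proof. by apply: eq_bigcapr => k _; exact: image_iterE. Qed.

Lemma VminusE (V : set T) x : Vminus alpha V x <-> forall k, V (iter k alpha x).
Proof.
split=> [Vx [|k]|Vx [|k] _] /=.
- by have [y Vy <-] := Vx 0%N I.
- exact: Vx k.+1 I.
- by exists x; first exact: (Vx 0%N).
- exact: Vx k.+1.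
Qed.

Lemma tidy_core_eq1 (V : set T) : tidy_core alpha V = [set one] -> forall x,
  (forall k, V (iter k beta x)) -> (forall k, V (iter k alpha x)) -> x = one.
Proof.
move=> core x Vbx Vax; suff : tidy_core alpha V x by rewrite core.
by move=> [k|k] _; [rewrite /apow_img image_iterE; exact: Vbx | exact: Vax].
Qed.

Lemma continuous_beta : continuous beta.
Proof. by apply/continuousP => A oA; rewrite -image_alphaE; exact: alpha_open. Qed.

Lemma Vplus_iter_beta (V : set T) m x :
  Vplus alpha V x -> Vplus alpha V (iter m beta x).
Proof. by rewrite VplusE => Vx k _; rewrite /= -iterD; exact: Vx. Qed.

Lemma subgroup_image_alpha (S : set T) : subgroup S -> subgroup (alpha @` S).
Proof. by rewrite image_alphaE; apply: subgroup_preimage betaM. Qed.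

Lemma subgroup_Vplus (V : set T) : subgroup V -> subgroup (Vplus alpha V).
Proof.
move=> sV; rewrite VplusE; apply: subgroup_bigcap => k.
exact: subgroup_preimage (iter_morph betaM k) sV.
Qed.

Lemma Vplus_sub_image (V : set T) : Vplus alpha V `<=` alpha @` Vplus alpha V.
Proof. by move=> x Vx; rewrite image_alphaE; exact: (Vplus_iter_beta 1). Qed.

Lemma image_VplusI (V : set T) x :
  (alpha @` Vplus alpha V) x -> V x -> Vplus alpha V x.
Proof.
rewrite image_alphaE VplusE => Vbx Vx [|k] _ //=.
by rewrite -iterS iterSr; exact: Vbx k I.
Qed.

Lemma closed_Vplus (V : set T) : subgroup V -> open V -> closed (Vplus alpha V).
Proof.
move=> sV oV; rewrite VplusE; apply: closed_bigI => k _.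
apply: preimage_closed (closed_open_subgroup sV oV) => x _.
exact: continuous_iter continuous_beta _ x.
Qed.

(* The closed sets [alpha^-n(V_+)] all contain [alpha^-k(V_+)] for n <= k,
   and their intersection lies in the tidy core, hence in W; compactness
   makes finitely many of them suffice. *)
Lemma Vplus_eventually_in (V W : set T) : subgroup V -> open V ->
  tidy_core alpha V = [set one] -> open W -> W one ->
  exists N, forall x k, Vplus alpha V x -> (N <= k)%N -> W (iter k beta x).
Proof.
move=> sV oV core oW W1.
pose D n := iter n alpha @^-1` Vplus alpha V.
have closedD n : closed (D n).
  apply: preimage_closed (closed_Vplus sV oV) => x _.
  exact: continuous_iter alpha_cont _ x.
have [||F _ cov] := compact_cover_at one compactT (D := [set: nat])
  (f := fun i => if i is n.+1 then ~` D n else W).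
- by case=> [|n] _ //; exact: closed_openC.
- move=> x _; have [Wx|nWx] := pselect (W x); first by exists 0%N.
  have [[n nDx]|Dx] := pselect (exists n, ~ D n x); first by exists n.+1.
  have {}Dx n : Vplus alpha V (iter n alpha x).
    by apply: contrapT => nDx; apply: Dx; exists n.
  exfalso; apply/nWx; rewrite (tidy_core_eq1 core (x := x)) //.
    by move=> k; have := Dx 0%N; rewrite VplusE => /(_ k I).
  by move=> k; have := Dx k; rewrite VplusE => /(_ 0%N I).
exists (\max_(i <- finmap.enum_fset F) i) => x k Px Nk.
have [[|n] Fn //= nDn] := cov (iter k beta x) I; exfalso; apply: nDn.
have nk : (n <= k)%N.
  apply: leq_trans (leqnSn n) (leq_trans _ Nk).
  exact: (@leq_bigmax_seq _ _ xpredT id n.+1 Fn).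
by rewrite /D /= -(subnKC nk) iterD iter_betaK; exact: Vplus_iter_beta.
Qed.

Lemma finite_index_Vplus (V : set T) : subgroup V -> open V ->
  finite_set (left_cosets mul (alpha @` Vplus alpha V) (Vplus alpha V)).
Proof.
move=> sV oV; have sP := subgroup_Vplus sV.
apply: card_le_finite (finite_cosets_open_subgroup sV oV).
exact: index_le_cosets sP sV (@image_VplusI V) (subgroupVM (subgroup_image_alpha sP)).
Qed.

Lemma finite_index_Vplus_setI (V W : set T) : subgroup V -> open V ->
  tidy_core alpha V = [set one] -> subgroup W -> open W ->
  finite_set (left_cosets mul (Vplus alpha V) (Vplus alpha (V `&` W))).
Proof.
move=> sV oV core sW oW; have sP := subgroup_Vplus sV.
have sQ := subgroup_Vplus (subgroupI sV sW).
have [N WN] := Vplus_eventually_in sV oV core oW (subgroup1 sW).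
pose O := \bigcap_(k < N) (iter k beta @^-1` W).
have sO : subgroup O.
  by apply: subgroup_bigcap => k; exact: subgroup_preimage (iter_morph betaM k) sW.
have oO : open O.
  rewrite /O bigcap_mkord; elim/big_ind: _ => //; [exact: openT|exact: openI|].
  move=> k _; apply: open_comp oW => x _; exact: continuous_iter continuous_beta _ x.
apply: card_le_finite (finite_cosets_open_subgroup sO oO).
apply: index_le_cosets sQ sO _ (subgroupVM sP) => x Px Ox.
rewrite VplusE => k _; split; first by move: Px; rewrite VplusE => /(_ k I).
by case: (ltnP k N) => kN; [exact: Ox k kN | exact: WN].
Qed.

Lemma index_Vplus_setI (V W : set T) : subgroup V -> open V ->
  tidy_core alpha V = [set one] -> subgroup W -> open W ->
  left_cosets mul (alpha @` Vplus alpha V) (Vplus alpha V) #=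
  left_cosets mul (alpha @` Vplus alpha (V `&` W)) (Vplus alpha (V `&` W)).
Proof.
move=> sV oV core sW oW; have sU := subgroupI sV sW.
set P := Vplus alpha V; set Q := Vplus alpha (V `&` W).
have sP : subgroup P := subgroup_Vplus sV; have sQ : subgroup Q := subgroup_Vplus sU.
have QP : Q `<=` P by rewrite /Q /P !VplusE => x Qx k _; case: (Qx k I).
have [p Hp] := finite_index_Vplus sV oV.
have [q Hq] := finite_index_Vplus sU (openI oV oW).
have [m Hm] := finite_index_Vplus_setI sV oV core sW oW.
have saP := subgroup_image_alpha sP; have saQ := subgroup_image_alpha sQ.
have aQ := index_morph P Q alphaM (can_inj alphaK).
have E1 := index_towerII saP sP sQ QP (@Vplus_sub_image V) Hp Hm.
have E2 := index_towerII saP saQ sQ (@Vplus_sub_image (V `&` W))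
  (image_subset alpha QP) (card_eq_trans (card_esym aQ) Hm) Hq.
have /card_eq_II e := card_eq_trans (card_esym E1) E2.
have m_gt0 : (0 < m)%N.
  by apply: (card_II_gt0 Hm); exists one; first exact: subgroup1.
have epq : p = q by apply/eqP; rewrite -(eqn_pmul2r m_gt0) e mulnC.
by rewrite epq in Hp; exact: card_eq_trans Hp (card_esym Hq).
Qed.

Lemma Vplus_trivial (V : set T) : tidy_core alpha V = [set one] ->
  alpha @` Vplus alpha V `<=` Vplus alpha V -> Vplus alpha V `<=` [set one].
Proof.
move=> core aPP x Px.
have Pax n : Vplus alpha V (iter n alpha x).
  by elim: n => //= n IH; apply: aPP; exists (iter n alpha x).
apply: (tidy_core_eq1 core); first by move=> k; move: Px; rewrite VplusE => /(_ k I).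
by move=> k; have := Pax k; rewrite VplusE => /(_ 0%N I).
Qed.

Lemma index_image_alpha (S : set T) :
  left_cosets mul [set: T] S #= left_cosets mul [set: T] (alpha @` S).
Proof.
have aT : alpha @` [set: T] = [set: T] by rewrite image_alphaE.
by rewrite -{2}aT; exact: index_morph (can_inj alphaK).
Qed.

Lemma image_alpha_open_subgroup (V : set T) : subgroup V -> open V ->
  alpha @` V `<=` V -> V `<=` alpha @` V.
Proof.
move=> sV oV aVV; have saV := subgroup_image_alpha sV.
have [n Hn] := finite_cosets_open_subgroup sV oV.
have [m Hm] : finite_set (left_cosets mul V (alpha @` V)).
  apply: card_le_finite (finite_cosets_open_subgroup saV (alpha_open oV)).
  exact: (index_le_cosets saV saV (fun _ _ => id) (subgroupVM sV)).
have sT : subgroup [set: T] by [].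
have E := index_towerII sT sV saV aVV (fun _ _ => I) Hn Hm.
have /card_eq_II e := card_eq_trans (card_esym E)
  (card_eq_trans (card_esym (index_image_alpha V)) Hn).
have n_gt0 : (0 < n)%N by apply: (card_II_gt0 Hn); exists one.
have m1 : m = 1%N by apply/eqP; rewrite -(eqn_pmul2l n_gt0) muln1 e.
by apply: subset_of_index_le1 sV saV (card_II1_le_unit _); rewrite -m1.
Qed.

Lemma index_Vplus_gt1 (V : set T) : subgroup V -> open V ->
  tidy_core alpha V = [set one] -> V = setmul mul (Vplus alpha V) (Vminus alpha V) ->
  infinite_set [set: T] ->
  ~ (left_cosets mul (alpha @` Vplus alpha V) (Vplus alpha V) #<= [set: unit]).
Proof.
move=> sV oV core VPM infT.
have sP := subgroup_Vplus sV.
move/(subset_of_index_le1 (subgroup_image_alpha sP) sP)/(Vplus_trivial core) => P1.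
have aVV : alpha @` V `<=` V.
  move=> _ [x + <-]; rewrite {1}VPM => -[p /P1 -> [y /VminusE Vy <-]].
  by rewrite mul1x; exact: Vy 1%N.
have := image_alpha_open_subgroup sV oV aVV; rewrite image_alphaE => VbV.
apply/infT/(finite_of_trivial_open_subgroup sV oV) => x Vx.
by apply: (tidy_core_eq1 core); elim=> //= k IH; [exact: VbV | exact: aVV (imageP _ IH)].
Qed.

End Automorphism.
End Group.

Theorem proposition5p5 (T : topologicalType)
    (mul : T -> T -> T) (inv : T -> T) (one : T) (alpha : T -> T) :
  topological_group mul inv one ->
  hausdorff_space T ->
  compact [set: T] ->
  infinite_set [set: T] ->
  topgroup_automorphism mul alpha ->
  finite_depth mul inv one alpha ->
  (forall V : set T,
     is_subgroup mul inv one V -> open V ->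
     tidy_core alpha V = [set one] ->
     V = setmul mul (Vplus alpha V) (Vminus alpha V) ->
     ~ (left_cosets mul (alpha @` Vplus alpha V) (Vplus alpha V) #<= [set: unit]))
  /\
  (forall V W : set T,
     is_subgroup mul inv one V -> open V ->
     tidy_core alpha V = [set one] ->
     V = setmul mul (Vplus alpha V) (Vminus alpha V) ->
     is_subgroup mul inv one W -> open W ->
     tidy_core alpha W = [set one] ->
     W = setmul mul (Vplus alpha W) (Vminus alpha W) ->
     left_cosets mul (alpha @` Vplus alpha V) (Vplus alpha V)
       #= left_cosets mul (alpha @` Vplus alpha W) (Vplus alpha W)).
Proof.
move=> [mulA mul1x mulVx mulC _] _ compactT infT.
move=> [alphaM [beta alphaK betaK] alphaC alphaO] _.
have mul_cont := continuous_mulr mulC.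
split=> [V sV oV coreV VPM | V W sV oV coreV _ sW oW coreW _].
  exact (index_Vplus_gt1 mulA mul1x mulVx mul_cont compactT alphaM alphaK betaK
    alphaO sV oV coreV VPM infT).
have EV := index_Vplus_setI mulA mul1x mulVx mul_cont compactT alphaM alphaK betaK
  alphaC alphaO sV oV coreV sW oW.
have EW := index_Vplus_setI mulA mul1x mulVx mul_cont compactT alphaM alphaK betaK
  alphaC alphaO sW oW coreW sV oV.
by rewrite setIC in EW; exact: card_eq_trans EV (card_esym EW).
Qed.
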